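(* A $po$-$\Gamma$-semigroup $M$ is left regular if and only if for every fuzzy subset $f$ of $M$ we have $f\preceq 1\circ (f\circ f)$.
   Context: Let $M$ and $\Gamma$ be nonempty sets with a map $M\times\Gamma\times M\to M$, $(a,\gamma,b)\mapsto a\gamma b$, satisfying $(a\gamma b)\mu c=a\gamma(b\mu c)$ for all $a,b,c\in M$, $\gamma,\mu\in\Gamma$. A $po$-$\Gamma$-semigroup is such an $M$ with a partial order $\le$ such that $a\le b$ implies $a\gamma c\le b\gamma c$ and $c\gamma a\le c\gamma b$ for all $c\in M$, $\gamma\in\Gamma$. For $H\subseteq M$, $(H]=\{t\in M: t\le h \text{ for some } h\in H\}$; $M\Gamma a\Gamma a=\{x\gamma a\mu a: x\in M,\gamma,\mu\in\Gamma\}$. $M$ is left regular if $a\in(M\Gamma a\Gamma a]$ for every $a\in M$. A fuzzy subset of $M$ is a map $M\to[0,1]$; $1$ is the constant fuzzy subset with value $1$. For $c\in M$ let $A_c=\{(y,z)\in M\times M: c\le y\gamma z \text{ for some }\gamma\in\Gamma\}$. $(f\circ g)(c)=\bigvee_{(y,z)\in A_c}\min\{f(y),g(z)\}$ if $A_c\ne\emptyset$, and $0$ otherwise. $f\preceq g$ means $f(c)\le g(c)$ for all $c\in M$. *)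

(* fuzzy values live in an arbitrary realType R
   (any realType is a copy of the real numbers). *)
From HB Require Import structures.
From mathcomp Require Import all_boot all_order all_algebra.
From mathcomp Require Import all_classical all_reals.
Set Implicit Arguments. Unset Strict Implicit. Unset Printing Implicit Defensive.
Import Order.TTheory GRing.Theory Num.Theory.
Local Open Scope classical_set_scope.
Local Open Scope ring_scope.

Section PoGammaSemigroup.
Variables (M Gamma : Type) (op : M -> Gamma -> M -> M) (le : M -> M -> Prop).

Definition is_po_gamma_semigroup : Prop :=
  [/\ inhabited M, inhabited Gamma,
      (forall a b c (g m : Gamma), op (op a g b) m c = op a g (op b m c)),
      [/\ (forall a, le a a),
          (forall a b, le a b -> le b a -> a = b) &
          (forall a b c, le a b -> le b c -> le a c)] &
      (forall a b, le a b -> forall c (g : Gamma),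
          le (op a g c) (op b g c) /\ le (op c g a) (op c g b))].

Definition downset (H : set M) : set M := fun t => exists2 h, H h & le t h.

Definition MGaGa (a : M) : set M :=
  fun t => exists x (g m : Gamma), t = op (op x g a) m a.

Definition left_regular : Prop := forall a, downset (MGaGa a) a.

Definition Aset (c : M) : set (M * M) :=
  fun p => exists g : Gamma, le c (op p.1 g p.2).

Variable R : realType.

Definition fuzzy_subset (f : M -> R) : Prop := forall x, 0 <= f x <= 1.

Definition fuzzy_one : M -> R := fun _ => 1.

Definition fuzzy_comp (f g : M -> R) : M -> R := fun c =>
  if `[< Aset c !=set0 >] then
    sup [set Num.min (f p.1) (g p.2) | p in Aset c]
  else 0.

Definition fuzzy_le (f g : M -> R) : Prop := forall c, f c <= g c.

End PoGammaSemigroup.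

From HB Require Import structures.
From mathcomp Require Import all_boot all_order all_algebra.
From mathcomp Require Import all_classical all_reals.
Import Order.TTheory GRing.Theory Num.Theory.
Local Open Scope ring_scope.

(* If a <= x g a m a, then the pairs (x, a m a) in A_a and (a, a) in A_{a m a}
   give (1 o (f o f))(a) >= f a. Conversely, testing the inequality on the
   characteristic function of (a] yields pairs with a <= x g w,
   w <= y m z and y, z <= a, whence a <= x g (a m a) = (x g a) m a. *)

Set Implicit Arguments.

Section LeftRegular.
Variables (M Gamma : Type) (op : M -> Gamma -> M -> M) (le : M -> M -> Prop).
Variable R : realType.

Lemma fuzzy_comp_ge (f g : M -> R) c p :
  (forall x, f x <= 1) -> Aset op le c p ->
  Num.min (f p.1) (g p.2) <= fuzzy_comp op le f g c.
Proof.
move=> f_le1 Acp; rewrite /fuzzy_comp; case: asboolP => [_|A0]; last first.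
  by exfalso; apply: A0; exists p.
apply: ub_le_sup; last by exists p.
by exists 1 => _ [q _ <-]; rewrite ge_min f_le1.
Qed.

Lemma fuzzy_comp_gt0 (f g : M -> R) c : 0 < fuzzy_comp op le f g c ->
  exists2 p, Aset op le c p & 0 < Num.min (f p.1) (g p.2).
Proof.
rewrite /fuzzy_comp; case: asboolP => [[p Acp]|_]; last by rewrite ltxx.
apply: contraPP => nopos; apply/negP; rewrite -leNgt.
apply: ge_sup; first by exists (Num.min (f p.1) (g p.2)), p.
by move=> _ [q Acq <-]; rewrite leNgt; apply/negP => q_pos; apply: nopos; exists q.
Qed.

Hypothesis opA : forall a b c (g m : Gamma), op (op a g b) m c = op a g (op b m c).
Hypothesis le_reflexive : forall a, le a a.
Hypothesis le_transitive : forall a b c, le a b -> le b c -> le a c.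
Hypothesis le_op : forall a b, le a b -> forall c (g : Gamma),
  le (op a g c) (op b g c) /\ le (op c g a) (op c g b).

Lemma le_op2 a b c d (g : Gamma) : le a b -> le c d -> le (op a g c) (op b g d).
Proof. by move=> le_ab le_cd; apply: le_transitive (le_op le_ab c g).1 (le_op le_cd b g).2. Qed.

Lemma left_regular_fuzzy_le (f : M -> R) : left_regular op le ->
  (forall x, f x <= 1) ->
  fuzzy_le f (fuzzy_comp op le (@fuzzy_one M R) (fuzzy_comp op le f f)).
Proof.
move=> lreg f_le1 a; case: (lreg a) => _ [x [g [m ->]]] le_a.
have A1 : Aset op le a (x, op a m a) by exists g; rewrite -opA.
have A2 : Aset op le (op a m a) (a, a) by exists m.
apply: le_trans _ (fuzzy_comp_ge (@fuzzy_one M R) _ (fun=> lexx 1) A1).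
rewrite /= le_min f_le1 /=.
by apply: le_trans _ (fuzzy_comp_ge f f f_le1 A2); rewrite /= le_min lexx.
Qed.

Definition down_indicator (a : M) : M -> R := fun t => if `[< le t a >] then 1 else 0.

Lemma fuzzy_subset_down_indicator a : fuzzy_subset (down_indicator a).
Proof. by move=> t; rewrite /down_indicator; case: asboolP; rewrite ?lexx ?ler01. Qed.

Lemma down_indicator_gt0 a t : 0 < down_indicator a t -> le t a.
Proof. by rewrite /down_indicator; case: asboolP; rewrite ?ltxx. Qed.

Lemma down_indicator_id a : down_indicator a a = 1.
Proof. by rewrite /down_indicator; case: asboolP => // /(_ (le_reflexive a)). Qed.

Lemma down_indicator_fuzzy_le_downset a :
  fuzzy_le (down_indicator a) (fuzzy_comp op le (@fuzzy_one M R)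
    (fuzzy_comp op le (down_indicator a) (down_indicator a))) ->
  downset le (MGaGa op a) a.
Proof.
move=> /(_ a); rewrite down_indicator_id => /(lt_le_trans ltr01).
case/fuzzy_comp_gt0 => -[x w] [g le_a_xw] /=; rewrite lt_min => /andP[_].
case/fuzzy_comp_gt0 => -[y z] [m le_w_yz] /=; rewrite lt_min => /andP[].
move=> /down_indicator_gt0 le_ya /down_indicator_gt0 le_za.
exists (op (op x g a) m a); first by exists x, g, m.
rewrite opA; apply: le_transitive le_a_xw _; apply: le_op2 (le_reflexive x) _.
exact: le_transitive le_w_yz (le_op2 _ le_ya le_za).
Qed.

End LeftRegular.

Theorem theorem28 (M Gamma : Type) (op : M -> Gamma -> M -> M)
  (le : M -> M -> Prop) (R : realType) :
  is_po_gamma_semigroup op le ->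
  (left_regular op le <->
   forall f : M -> R, fuzzy_subset f ->
     fuzzy_le f (fuzzy_comp op le (@fuzzy_one M R)
                   (fuzzy_comp op le f f))).
Proof.
case=> _ _ opA [le_reflexive _ le_transitive] le_op; split.
- move=> lreg f f_fuzzy; apply: left_regular_fuzzy_le => // x.
  by case/andP: (f_fuzzy x).
- move=> fuzzy_ineq a; apply: (down_indicator_fuzzy_le_downset opA le_reflexive le_transitive le_op).
  by apply: fuzzy_ineq; exact: fuzzy_subset_down_indicator.
Qed.
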